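(* Let $P^n_\omega$ be a non-trivially weighted edge-weighted path on $n$ vertices whose edge ideal $I(P^n_\omega)$ is integrally closed. Then $P^n_\omega$ has at most two edges with non-trivial weight.
   Context: $\mathbb{K}$ is a field, $S=\mathbb{K}[x_1,\dots,x_n]$. For a simple graph $G$ with weight function $\omega:E(G)\to\mathbb{Z}_{>0}$, $I(G_\omega)=(x_i^{\omega(e)}x_j^{\omega(e)}\mid e=\{x_i,x_j\}\in E(G))$. An edge $e$ has non-trivial weight if $\omega(e)\ge 2$; $G_\omega$ is non-trivially weighted if at least one edge has non-trivial weight. An ideal $I$ is integrally closed if it equals its integral closure $\overline{I}$ (the set of $f\in S$ satisfying an equation $f^k+c_1f^{k-1}+\cdots+c_k=0$ with $c_i\in I^i$). *)

From HB Require Import structures.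
From mathcomp Require Import all_boot all_order all_algebra.
From mathcomp Require Import mpoly.
Set Implicit Arguments. Unset Strict Implicit. Unset Printing Implicit Defensive.
Import GRing.Theory.
Local Open Scope ring_scope.

(* Membership in the k-th power I^k of the ideal I generated by the finite
   list of generators s of a commutative ring R: I^k is generated by all
   products of k generators (I^0 = R). *)
Definition in_ideal_pow (R : comNzRingType) (s : seq R) (k : nat) (f : R) : Prop :=
  exists c : {ffun 'I_k -> 'I_(size s)} -> R,
    f = \sum_(t : {ffun 'I_k -> 'I_(size s)}) c t * \prod_(j < k) s`_(t j).

Definition in_ideal (R : comNzRingType) (s : seq R) (f : R) : Prop :=
  in_ideal_pow s 1 f.

Definition integral_over_ideal (R : comNzRingType) (s : seq R) (f : R) : Prop :=
  exists k : nat, (0 < k)%N /\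
    exists c : nat -> R,
      (forall i : nat, (1 <= i <= k)%N -> in_ideal_pow s i (c i)) /\
      f ^+ k + \sum_(1 <= i < k.+1) c i * f ^+ (k - i) = 0.

(* I = (s) equals its integral closure (I is always contained in it). *)
Definition integrally_closed (R : comNzRingType) (s : seq R) : Prop :=
  forall f : R, integral_over_ideal s f -> in_ideal s f.

(* The path P^{m+1} on the m+1 vertices x_0,...,x_m (variables of
   K[x_0..x_m]) has the m edges {x_i, x_{i+1}}, i : 'I_m. *)
Definition path_edge_gens (K : fieldType) (m : nat) (w : 'I_m -> nat)
  : seq {mpoly K[m.+1]} :=
  [seq 'X_(widen_ord (leqnSn m) i) ^+ w i * 'X_(lift ord0 i) ^+ w i
     | i <- enum 'I_m].

(* If two heavy edges e < f of the path are not exactly two apart, take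
     u = x_e^(w_e - 1) x_(e+1)^(w_e + w_f) x_f^(w_e + w_f) x_(f+1)^(w_f - 1)
   (exponents adding up when f = e + 1).  Then u^2 is a multiple of the
   product of the generators of e and f, so u is integral over I, while no
   generator x_j^(w_j) x_(j+1)^(w_j) divides u, so u is not in I.  Hence any
   two heavy edges are two apart, and three of them cannot exist. *)

From HB Require Import structures.
From mathcomp Require Import all_boot all_order all_algebra.
From mathcomp Require Import mpoly.
From mathcomp Require Import zify.
Set Implicit Arguments. Unset Strict Implicit. Unset Printing Implicit Defensive.
Import GRing.Theory.
Local Open Scope ring_scope.

Ltac case_eqn_lia := repeat (let E := fresh "E" in case: eqP => /= E); lia.

Section IdealPowers.
Variables (R : comNzRingType) (s : seq R).

Lemma in_ideal_pow0 k : in_ideal_pow s k 0.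
Proof. by exists (fun=> 0); rewrite big1 // => t _; rewrite mul0r. Qed.

Lemma in_ideal_powN k f : in_ideal_pow s k f -> in_ideal_pow s k (- f).
Proof.
case=> c ->; exists (fun t => - c t).
by rewrite -sumrN; apply: eq_bigr => t _; rewrite mulNr.
Qed.

Lemma in_ideal_pow2_mul (a x y : R) :
  x \in s -> y \in s -> in_ideal_pow s 2 (a * x * y).
Proof.
move=> xs ys.
pose t0 : {ffun 'I_2 -> 'I_(size s)} := [ffun j : 'I_2 =>
  if val j == 0%N then Ordinal (etrans (index_mem x s) xs)
  else Ordinal (etrans (index_mem y s) ys)].
exists (fun t => if t == t0 then a else 0).
rewrite (bigD1 t0) //= [X in _ + X]big1 ?addr0; last by move=> t /negbTE ->; rewrite mul0r.
by rewrite eqxx !big_ord_recl big_ord0 mulr1 !ffunE /= !nth_index // mulrA.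
Qed.

Lemma integral_over_ideal_sqr f :
  in_ideal_pow s 2 (f ^+ 2) -> integral_over_ideal s f.
Proof.
move=> f2I; exists 2%N; split=> //.
exists (fun i => if i == 2%N then - f ^+ 2 else 0); split.
- case=> [|[|[|i]]] //= _; [exact: in_ideal_pow0 | exact: in_ideal_powN].
- by rewrite big_nat_recr //= big_nat1 /= subnn expr0 mulr1 mul0r add0r addrN.
Qed.

End IdealPowers.

Section MonomialIdeals.
Variables (R : comNzRingType) (n : nat).

Lemma mcoeff_mulX_eq0 (p : {mpoly R[n]}) (m k : 'X_{1..n}) :
  ~~ (m <= k)%MM -> (p * 'X_[m])@_k = 0.
Proof.
move=> Nmk; rewrite mcoeffM big1 // => -[k1 k2] /= /eqP Ek.
rewrite mcoeffX; case: eqP => [Em|_]; last by rewrite mulr0.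
case/negP: Nmk; apply/mnm_lepP => j.
by rewrite Ek mnmDE -Em leq_addl.
Qed.

Lemma monomial_in_ideal (gs : seq 'X_{1..n}) (mu : 'X_{1..n}) :
  in_ideal [seq 'X_[g] : {mpoly R[n]} | g <- gs] 'X_[mu] ->
  has (fun g => g <= mu)%MM gs.
Proof.
apply: contraPT => /hasPn Nle [c /(congr1 (mcoeff mu))].
rewrite mcoeffX eqxx raddf_sum /= big1 => [/eqP|t _]; first by rewrite oner_eq0.
rewrite big_ord1; have /mapP[g g_gs ->] := mem_nth 0 (ltn_ord (t ord0)).
by rewrite mcoeff_mulX_eq0 ?Nle.
Qed.

End MonomialIdeals.

Section PathEdgeIdeal.
Variables (K : fieldType) (m : nat) (w : 'I_m -> nat).

Definition path_edge_mnm (e : 'I_m) : 'X_{1..m.+1} :=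
  [multinom (((val j == val e) + (val j == (val e).+1)) * w e)%N | j < m.+1].

Lemma path_edge_gensE :
  path_edge_gens K w = [seq 'X_[g] | g <- map path_edge_mnm (enum 'I_m)].
Proof.
rewrite -map_comp; apply: eq_map => e; rewrite !mpolyXn -mpolyXD; congr 'X_[_].
apply/mnmP => j; rewrite mnmDE !mulmnE !mnm1E mnmE.
rewrite -[widen_ord _ _ == j]val_eqE -[lift ord0 _ == j]val_eqE /= /bump leq0n add1n.
by rewrite mulnDl ![(_ == val j)]eq_sym.
Qed.

Lemma path_edge_mnm_le (e : 'I_m) (mu : 'X_{1..m.+1}) :
  (path_edge_mnm e <= mu)%MM ->
  (w e <= mu (widen_ord (leqnSn m) e))%N /\ (w e <= mu (lift ord0 e))%N.
Proof.
move/mnm_lepP => le_mu; split.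
- have := le_mu (widen_ord (leqnSn m) e).
  by rewrite mnmE /= eqxx (ltn_eqF (ltnSn _)) addn0 mul1n.
- have := le_mu (lift ord0 e).
  by rewrite mnmE /= /bump leq0n add1n eqxx (gtn_eqF (ltnSn _)) mul1n.
Qed.

Lemma heavy_path_edges_gap2 (w_pos : forall e, (0 < w e)%N) (i k : 'I_m) :
  (i < k)%N -> (2 <= w i)%N -> (2 <= w k)%N ->
  integrally_closed (path_edge_gens K w) -> k = i.+2 :> nat.
Proof.
move=> lt_ik wi2 wk2 closed; apply/eqP; apply: contraT => Nk2.
pose F (x : nat) := ((x == i) * (w i - 1) + (x == i.+1) * (w i + w k)
  + (x == k) * (w i + w k) + (x == k.+1) * (w k - 1))%N.
pose G (x : nat) := ((x == i) * (w i - 2) + (x == i.+1) * (w i + 2 * w k)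
  + (x == k) * (2 * w i + w k) + (x == k.+1) * (w k - 2))%N.
pose mu : 'X_{1..m.+1} := [multinom F j | j < m.+1].
pose cofactor : 'X_{1..m.+1} := [multinom G j | j < m.+1].
have mu2 : (mu *+ 2 = cofactor + path_edge_mnm i + path_edge_mnm k)%MM.
  apply/mnmP => j; rewrite mulmnE !mnmDE !mnmE /F /G.
  by case_eqn_lia.
have edge_gen (e : 'I_m) : 'X_[path_edge_mnm e] \in path_edge_gens K w.
  by rewrite path_edge_gensE !map_f ?mem_enum.
have /closed : integral_over_ideal (path_edge_gens K w) 'X_[mu].
  apply: integral_over_ideal_sqr.
  by rewrite mpolyXn mu2 !mpolyXD; apply: in_ideal_pow2_mul; apply: edge_gen.
rewrite path_edge_gensE => /monomial_in_ideal /hasP[_ /mapP[e _ ->]].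
case/path_edge_mnm_le; rewrite !mnmE /= /bump leq0n add1n /F.
move: Nk2 (w_pos e) => /eqP Nk2.
case: (eqVneq (e : nat) i) => [/val_inj ->|/eqP Nei]; first by case_eqn_lia.
case: (eqVneq (e : nat) k) => [/val_inj ->|/eqP Nek]; case_eqn_lia.
Qed.

End PathEdgeIdeal.

Lemma card_le2_of_gap2 n (A : {set 'I_n}) :
  (forall p q, p \in A -> q \in A -> (p < q)%N -> q = p.+2 :> nat) ->
  (#|A| <= 2)%N.
Proof.
move=> gap2; rewrite leqNgt; apply/card_gt2P => -[x [y [z [[xA yA zA] []]]]].
have gap p q : p \in A -> q \in A -> p != q -> p = q.+2 :> nat \/ q = p.+2 :> nat.
  move=> pA qA; rewrite -val_eqE /=.
  by case: ltngtP => // [/(gap2 p q pA qA)|/(gap2 q p qA pA)] ->; [right|left].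
move=> /(gap _ _ xA yA) + /(gap _ _ yA zA) + /(gap _ _ zA xA); lia.
Qed.

Theorem corollary4p5 (K : fieldType) (m : nat) (w : 'I_m -> nat)
    (w_pos : forall i : 'I_m, (0 < w i)%N)
    (nontriv : exists i : 'I_m, (2 <= w i)%N)
    (closed : integrally_closed (path_edge_gens K w)) :
  (#|[set i : 'I_m | (2 <= w i)%N]| <= 2)%N.
Proof.
apply: card_le2_of_gap2 => p q; rewrite !inE => wp2 wq2 lt_pq.
exact: heavy_path_edges_gap2 lt_pq wp2 wq2 closed.
Qed.
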